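(* Let $F=\{T_1,\dots,T_t\}$ be a random forest with $t\ge 1$ and, for an input $x\in\mathcal{D}$, let $L_x$ be the labelling of the explanation BAG $\mathcal{B}_F$ defined by: a feature argument $A_{X_i\in S_{i,j}}$ is $\mathrm{in}$ if $x_i\in S_{i,j}$ and $\mathrm{out}$ otherwise; a rule argument $A_{T,r}$ is $\mathrm{in}$ if $r$ is the active rule in $T$ for $x$ and $\mathrm{out}$ otherwise; a class argument is $\mathrm{in}$ if its supporters dominate its attackers, $\mathrm{out}$ if its attackers dominate its supporters, and $\mathrm{und}$ otherwise. Then (1) for every $x\in\mathcal{D}$, $L_x$ is a bi-complete labelling of $\mathcal{B}_F$; (2) there is at most one $y\in\mathcal{C}$ with $L_x(A_y)=\mathrm{in}$, and if $L_x(A_y)=\mathrm{in}$ for some $y\in\mathcal{C}$, then $L_x(A_{y'})=\mathrm{out}$ for all $y'\in\mathcal{C}\setminus\{y\}$.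
   Context: Features $X_1,\dots,X_k$ have domains $D_1,\dots,D_k$; each feature is categorical (finite domain) or numerical ($D_i\subseteq\mathbb{R}$). Inputs are $x=(x_1,\dots,x_k)\in\mathcal{D}=D_1\times\dots\times D_k$; $\mathcal{C}$ is a finite set of class labels. Feature conditions are $X_i=v$ (categorical) or $X_i\le v$ (numerical); a feature literal is a condition or its negation. A rule $r$ is $\mathrm{prem}(r)\rightarrow\mathrm{conc}(r)$ with $\mathrm{prem}(r)$ a finite set of feature literals and $\mathrm{conc}(r)\in\mathcal{C}$. A decision tree $T$ is a finite set of rules such that every input satisfies the premise of exactly one rule of $T$, the active rule in $T$ for $x$. A random forest is a finite set of decision trees. Domain partition: for a categorical feature, the singletons $\{v\}$, $v\in D_i$; for a numerical feature with distinct thresholds $v_1<\dots<v_m$ occurring in conditions $X_i\le v$ in $F$, the sets $D_i\cap(-\infty,v_1]$, $D_i\cap(v_{j-1},v_j]$ ($2\le j\le m$), $D_i\cap(v_m,\infty)$; denote them $S_{i,1},\dots,S_{i,n_i}$. A BAG is $(\mathcal{A},\mathrm{Att},\mathrm{Sup})$ with $\mathcal{A}$ finite and $\mathrm{Att},\mathrm{Sup}\subseteq\mathcal{A}\times\mathcal{A}$; $\mathrm{Att}(A)=\{B:(B,A)\in\mathrm{Att}\}$, $\mathrm{Sup}(A)=\{B:(B,A)\in\mathrm{Sup}\}$. A labelling is a map $L:\mathcal{A}\to\{\mathrm{in},\mathrm{out},\mathrm{und}\}$. The attackers of $A$ dominate its supporters if $|\{B\in\mathrm{Att}(A):L(B)=\mathrm{in}\}|>|\{B\in\mathrm{Sup}(A):L(B)\ne\mathrm{out}\}|$;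 the supporters dominate the attackers if $|\{B\in\mathrm{Sup}(A):L(B)=\mathrm{in}\}|>|\{B\in\mathrm{Att}(A):L(B)\ne\mathrm{out}\}|$. $L$ is bi-complete if for every $A$: $L(A)=\mathrm{in}$ iff ($L(B)=\mathrm{out}$ for all $B\in\mathrm{Att}(A)$ or $A$'s supporters dominate its attackers), and $L(A)=\mathrm{out}$ iff $A$'s attackers dominate its supporters. The explanation BAG $\mathcal{B}_F$ has arguments: a class argument $A_y$ for each $y\in\mathcal{C}$; a rule argument $A_{T,r}$ for each $T\in F$, $r\in T$; a feature argument $A_{X_i\in S_{i,j}}$ for each feature $i$ and partition set $S_{i,j}$. Attacks: between any two distinct feature arguments of the same feature; from $A_{X_i\in S_{i,j}}$ to $A_{T,r}$ whenever some literal in $\mathrm{prem}(r)$ is satisfied by no value in $S_{i,j}$; from $A_{T,r}$ to $A_y$ whenever $\mathrm{conc}(r)\ne y$. Supports: from $A_{T,r}$ to $A_y$ whenever $\mathrm{conc}(r)=y$. No other attacks or supports. *)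

From HB Require Import structures.
From mathcomp Require Import all_boot all_order all_algebra.
From mathcomp Require Import boolp reals.
Set Implicit Arguments. Unset Strict Implicit. Unset Printing Implicit Defensive.
Import Order.TTheory GRing.Theory Num.Theory.
Local Open Scope ring_scope.

(* [bag_att B b a] means (b, a) \in Att, i.e. b attacks a.             *)
Record bag (A : eqType) := Bag {
  bag_args : seq A;
  bag_att : A -> A -> bool;
  bag_sup : A -> A -> bool }.

Inductive label := lin | lout | lund.

Definition is_in (l : label) : bool := if l is lin then true else false.
Definition is_out (l : label) : bool := if l is lout then true else false.

Section BAGDefs.
Variable A : eqType.
Variable B : bag A.
Variable L : A -> label.

Definition n_att_in (a : A) : nat :=
  count (fun b => bag_att B b a && is_in (L b)) (bag_args B).
Definition n_att_nout (a : A) : nat :=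
  count (fun b => bag_att B b a && ~~ is_out (L b)) (bag_args B).
Definition n_sup_in (a : A) : nat :=
  count (fun b => bag_sup B b a && is_in (L b)) (bag_args B).
Definition n_sup_nout (a : A) : nat :=
  count (fun b => bag_sup B b a && ~~ is_out (L b)) (bag_args B).

Definition att_dom (a : A) : bool := (n_sup_nout a < n_att_in a)%N.
Definition sup_dom (a : A) : bool := (n_att_nout a < n_sup_in a)%N.

Definition bicomplete : Prop :=
  forall a, a \in bag_args B ->
    (L a = lin <->
       ((forall b, b \in bag_args B -> bag_att B b a -> L b = lout) \/ sup_dom a))
    /\ (L a = lout <-> att_dom a).

End BAGDefs.

Section Forests.
(* R: the reals; V: a finite type holding all categorical values;      *)
Variables (R : realType) (V C : finType) (k : nat).

(* A feature value: inl r (numerical value r) or inr v (categorical v). *)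
Definition value := (R + V)%type.
Definition input := 'I_k -> value.

(* A feature condition on feature i: (i, inl v) is "X_i = v",          *)
(* (i, inr t) is "X_i <= t".                                            *)
Definition cond := ('I_k * (V + R))%type.
(* A feature literal: (true, c) is the condition c, (false, c) is its  *)
(* negation.                                                            *)
Definition literal := (bool * cond)%type.
Definition rule := (seq literal * C)%type.
Definition prem (r : rule) : seq literal := r.1.
Definition conc (r : rule) : C := r.2.
Definition tree := seq rule.
Definition forest := seq tree.

Definition litfeat (l : literal) : 'I_k := l.2.1.

Definition cond_sat (c : V + R) (w : value) : bool :=
  match c, w with
  | inl v, inr v' => v' == v
  | inr t, inl r => r <= t
  | _, _ => false
  end.

Definition lit_sat (l : literal) (w : value) : bool :=
  if l.1 then cond_sat l.2.2 w else ~~ cond_sat l.2.2 w.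

Definition rule_sat (x : input) (r : rule) : bool :=
  all (fun l => lit_sat l (x (litfeat l))) (prem r).

(* Feature kinds and domains: isnum i = feature i is numerical;        *)
(* Dn i is the domain D_i (a subset of R) of a numerical feature;      *)
(* Dc i is the (finite) domain D_i of a categorical feature.           *)
Variable isnum : 'I_k -> bool.
Variable Dn : 'I_k -> pred R.
Variable Dc : 'I_k -> {set V}.

Definition in_domain (x : input) : Prop :=
  forall i, match x i with
            | inl r => isnum i && Dn i r
            | inr v => ~~ isnum i && (v \in Dc i)
            end.

Definition wf_literal (l : literal) : bool :=
  match l.2.2 with
  | inl _ => ~~ isnum (litfeat l)
  | inr _ => isnum (litfeat l)
  end.

Definition is_tree (T : tree) : Prop :=
  uniq T /\ (forall r, r \in T -> all wf_literal (prem r)) /\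
  (forall x, in_domain x -> exists! r, r \in T /\ rule_sat x r).

Definition active (T : tree) (x : input) (r : rule) : bool :=
  (r \in T) && rule_sat x r.

Definition is_forest (F : forest) : Prop :=
  uniq F /\ (forall T, T \in F -> is_tree T).

Definition lit_thr (i : 'I_k) (l : literal) : seq R :=
  match l.2 with
  | (i', inr t) => if i' == i then [:: t] else [::]
  | _ => [::]
  end.

Definition thresholds (F : forest) (i : 'I_k) : seq R :=
  sort <=%R (undup (flatten [seq flatten [seq lit_thr i l | l <- prem r]
                                | r <- flatten F])).

(* j-th interval (j = 0 .. m, 0-indexed) determined by sorted s = [v_1..v_m]: *)
(* j = 0: (-oo, v_1]; 0 < j < m: (v_j, v_{j+1}]; j = m: (v_m, +oo);   *)
(* when m = 0 the single interval is all of R.                          *)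
Definition in_interval (s : seq R) (j : nat) (r : R) : bool :=
  ((j == 0)%N || (nth 0 s j.-1 < r)) && ((j == size s) || (r <= nth 0 s j)).

(* Argument names: class arguments A_y, rule arguments A_{T,r},        *)
(* categorical feature arguments A_{X_i in {v}} and numerical feature   *)
(* arguments A_{X_i in S_{i,j}} (j = 0 .. m).                           *)
Inductive arg :=
  | AClass of C
  | ARule of tree & rule
  | AFeatC of 'I_k & V
  | AFeatN of 'I_k & nat.

Definition arg_code (a : arg) :=
  match a with
  | AClass y => inl (inl y)
  | ARule T r => inl (inr (T, r))
  | AFeatC i v => inr (inl (i, v))
  | AFeatN i j => inr (inr (i, j))
  end.
Definition arg_decode c : arg :=
  match c with
  | inl (inl y) => AClass y
  | inl (inr (T, r)) => ARule T r
  | inr (inl (i, v)) => AFeatC i v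
  | inr (inr (i, j)) => AFeatN i j
  end.
Lemma arg_codeK : cancel arg_code arg_decode. Proof. by case. Qed.
HB.instance Definition _ := Equality.copy arg (can_type arg_codeK).

Definition featof (a : arg) : option 'I_k :=
  match a with
  | AFeatC i _ | AFeatN i _ => Some i
  | _ => None
  end.

Definition is_feat (a : arg) : bool := featof a != None.

Definition partset (F : forest) (a : arg) : pred value :=
  match a with
  | AFeatC i v => fun w => w == inr v
  | AFeatN i j => fun w => if w is inl r
                           then Dn i r && in_interval (thresholds F i) j r
                           else false
  | _ => fun _ => false
  end.

Definition args (F : forest) : seq arg :=
  [seq AClass y | y <- enum C]
  ++ [seq ARule T r | T <- F, r <- T]
  ++ flatten [seq (if isnum i
                   then [seq AFeatN i j | j <- iota 0 (size (thresholds F i)).+1]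
                   else [seq AFeatC i v | v <- enum (Dc i)])
             | i <- enum 'I_k].

Definition att (F : forest) (b a : arg) : bool :=
  match b, a with
  | AClass _, _ => false
  | ARule _ r, AClass y => conc r != y
  | ARule _ _, _ => false
  | _, AClass _ => false
  | _, ARule _ r =>
      `[< exists l, l \in prem r /\ Some (litfeat l) = featof b /\
                    forall w, partset F b w -> ~~ lit_sat l w >]
  | _, _ => (featof b == featof a) && (b != a)
  end.

Definition sup (F : forest) (b a : arg) : bool :=
  match b, a with
  | ARule _ r, AClass y => conc r == y
  | _, _ => false
  end.

Definition BF (F : forest) : bag arg := Bag (args F) (att F) (sup F).

Definition Lbase (F : forest) (x : input) (a : arg) : label :=
  match a with
  | AClass _ => lund
  | ARule T r => if active T x r then lin else lout
  | AFeatC i _ | AFeatN i _ => if partset F a (x i) then lin else lout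
  end.

(* supporters of a class argument are rule arguments, labelled by Lbase)*)
Definition Lx (F : forest) (x : input) (a : arg) : label :=
  match a with
  | AClass _ =>
      if sup_dom (BF F) (Lbase F x) a then lin
      else if att_dom (BF F) (Lbase F x) a then lout
      else lund
  | _ => Lbase F x a
  end.

End Forests.

From mathcomp Require Import all_boot all_order all_algebra.
From mathcomp Require Import boolp reals.
From mathcomp Require Import zify.
Set Implicit Arguments. Unset Strict Implicit. Unset Printing Implicit Defensive.
Import Order.TTheory GRing.Theory Num.Theory.
Local Open Scope ring_scope.

(* Feature arguments of one feature attack each other and exactly one of
   them, the partition cell containing x_i, is in; so a feature argument is in
   iff all its attackers are out, and otherwise the cell attacks it.  A rule
   argument is attacked by the cells on which one of its literals fails
   everywhere; as the partition refines every threshold of F, each literal is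
   constant on a cell, so a rule is active iff no cell that is in attacks it.
   A class argument A_y is labelled by dominance; if all its attackers are out,
   the active rule of a tree of F concludes y and supporters dominate.  Finally
   every rule supporting y attacks A_y' for y' <> y, so if the supporters of
   A_y dominate, the attackers of A_y' dominate its supporters. *)

Section Intervals.
Variable R : realType.

Lemma in_interval_size (s : seq R) j r : in_interval s j r -> (j <= size s)%N.
Proof.
rewrite /in_interval; case: leqP => // lt_s_j.
rewrite (gtn_eqF lt_s_j) /= [nth _ s j]nth_default 1?ltnW //.
case: j lt_s_j => // j; rewrite ltnS => le_s_j /=.
rewrite nth_default // => /andP[r_gt0 r_le0].
by have := lt_le_trans r_gt0 r_le0; rewrite ltxx.
Qed.

Lemma in_interval_exists (s : seq R) r : exists j, in_interval s j r.
Proof.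
exists (find (fun t => r <= t) s); rewrite /in_interval; apply/andP; split.
  case: (find _ _) (@before_find _ 0 (fun t => r <= t) s) => [//|j] before.
  by rewrite /= ltNge before.
case: (boolP (has (fun t => r <= t) s)) => has_ge.
  by rewrite (nth_find 0 has_ge) orbT.
by rewrite (hasNfind has_ge) eqxx.
Qed.

Lemma in_interval_le_nth (s : seq R) j r m : sorted <=%R s ->
  in_interval s j r -> (m < size s)%N -> (r <= nth 0 s m) = (j <= m)%N.
Proof.
move=> s_sorted s_j_r m_lt; have j_le := in_interval_size s_j_r.
have /andP[lt_r r_le] := s_j_r.
have nth_mono := sorted_leq_nth le_trans lexx 0 s_sorted.
case: leqP => [le_jm|lt_mj].
  have j_lt : (j < size s)%N by apply: leq_ltn_trans m_lt.
  move: r_le; rewrite (ltn_eqF j_lt) /= => /le_trans -> //.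
  by apply: nth_mono; rewrite ?inE.
case: j lt_mj j_le lt_r {r_le s_j_r} => // j; rewrite ltnS => le_mj j_lt /= lt_r.
by apply/negbTE; rewrite -ltNge (le_lt_trans _ lt_r) // nth_mono ?inE.
Qed.

Lemma in_interval_inj (s : seq R) j j' r : sorted <=%R s ->
  in_interval s j r -> in_interval s j' r -> j = j'.
Proof.
move=> s_sorted.
wlog lt_j'j : j j' / (j' < j)%N => [wlog_lt|s_j s_j'].
  move=> s_j s_j'; case: (ltngtP j' j) => // lt.
    exact: wlog_lt.
  by apply/esym/wlog_lt.
have j'_lt := leq_trans lt_j'j (in_interval_size s_j).
have := in_interval_le_nth s_sorted s_j j'_lt.
by rewrite (in_interval_le_nth s_sorted s_j' j'_lt) leqnn leqNgt lt_j'j.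
Qed.

End Intervals.

Section BAGFacts.
Variables (A : eqType) (B : bag A).

Local Notation args := (bag_args B).
Local Notation att := (bag_att B).
Local Notation sup := (bag_sup B).

Definition dom_label (L : A -> label) (a : A) : label :=
  if sup_dom B L a then lin else if att_dom B L a then lout else lund.

Lemma eq_dom_label (L L' : A -> label) a :
  (forall b, att b a || sup b a -> L b = L' b) -> dom_label L a = dom_label L' a.
Proof.
move=> eqL.
have eq_cnt (rel : A -> A -> bool) (p : label -> bool) :
    (forall b, rel b a -> L b = L' b) ->
    count (fun b => rel b a && p (L b)) args = count (fun b => rel b a && p (L' b)) args.
  by move=> eqL_rel; apply: eq_count => b; case: (boolP (rel b a)) => // /eqL_rel ->.
have eqL_att b : att b a -> L b = L' b by move=> ab; apply: eqL; rewrite ab.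
have eqL_sup b : sup b a -> L b = L' b by move=> sb; apply: eqL; rewrite sb orbT.
by rewrite /dom_label /sup_dom /att_dom /n_att_nout /n_sup_in /n_sup_nout /n_att_in
  (eq_cnt att is_in) // (eq_cnt sup is_in) // (eq_cnt att (fun l => ~~ is_out l)) //
  (eq_cnt sup (fun l => ~~ is_out l)).
Qed.

Variable L : A -> label.

Definition bicomplete_at (a : A) : Prop :=
  (L a = lin <->
     (forall b, b \in args -> att b a -> L b = lout) \/ sup_dom B L a)
  /\ (L a = lout <-> att_dom B L a).

Lemma n_att_in_le_nout a : (n_att_in B L a <= n_att_nout B L a)%N.
Proof. by apply: sub_count => b /andP[-> /=]; case: (L b). Qed.

Lemma n_sup_in_le_nout a : (n_sup_in B L a <= n_sup_nout B L a)%N.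
Proof. by apply: sub_count => b /andP[-> /=]; case: (L b). Qed.

Lemma sup_dom_att_domF a : sup_dom B L a -> att_dom B L a = false.
Proof.
rewrite /sup_dom /att_dom => sd; apply/negbTE; rewrite -leqNgt.
have := n_att_in_le_nout a; have := n_sup_in_le_nout a; lia.
Qed.

Lemma bicomplete_at_unsupported a (c : bool) :
  (forall b, ~~ sup b a) -> L a = (if c then lin else lout) ->
  (c -> forall b, b \in args -> att b a -> L b = lout) ->
  (~~ c -> exists2 b, b \in args & att b a && is_in (L b)) ->
  bicomplete_at a.
Proof.
move=> no_sup La in_att_out out_att_in.
have no_sup_count (p : pred A) : count (fun b => sup b a && p b) args = 0%N.
  apply/eqP; rewrite -leqn0 -(count_pred0 args) sub_count // => b.
  by rewrite (negbTE (no_sup b)).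
have sdF : sup_dom B L a = false by rewrite /sup_dom /n_sup_in no_sup_count.
have adE : att_dom B L a = has (fun b => att b a && is_in (L b)) args.
  by rewrite /att_dom /n_sup_nout no_sup_count has_count.
rewrite /bicomplete_at La sdF adE; case: c in La in_att_out out_att_in *.
- split; first by split=> // _; left; apply: in_att_out.
  split=> // /hasP[b b_in /andP[ab]].
  by rewrite (in_att_out isT b b_in ab).
- have [b b_in ab_in] := out_att_in isT.
  split; last by split=> // _; apply/hasP; exists b.
  split=> // -[all_out|] //; move: ab_in => /andP[ab].
  by rewrite (all_out b b_in ab).
Qed.

Lemma bicomplete_at_dom_label a : L a = dom_label L a ->
  ((forall b, b \in args -> att b a -> L b = lout) -> sup_dom B L a) ->
  bicomplete_at a.
Proof.
rewrite /bicomplete_at /dom_label => -> all_out_sd.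
case: (boolP (sup_dom B L a)) => [sd|/negbTE sdF].
  by rewrite (sup_dom_att_domF sd); split; split=> //; right.
split; last by case: (att_dom B L a).
split; first by case: (att_dom B L a).
by case=> [/all_out_sd|//]; rewrite sdF.
Qed.

Lemma dom_label_rival_out a a' :
  (forall b, sup b a -> att b a') -> (forall b, sup b a' -> att b a) ->
  L a = dom_label L a -> L a' = dom_label L a' -> L a = lin -> L a' = lout.
Proof.
move=> sup_att sup'_att La La' a_in.
have sd : sup_dom B L a by move: a_in; rewrite La /dom_label; case: ifP => //; case: ifP.
have le_in : (n_sup_in B L a <= n_att_in B L a')%N.
  by apply: sub_count => b /andP[/sup_att -> ->].
have le_nout : (n_sup_nout B L a' <= n_att_nout B L a)%N.
  by apply: sub_count => b /andP[/sup'_att -> ->].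
have ad' : att_dom B L a'.
  by move: sd; rewrite /sup_dom /att_dom; lia.
have sd'F : sup_dom B L a' = false.
  by apply: contraTF ad' => /sup_dom_att_domF ->.
by rewrite La' /dom_label sd'F ad'.
Qed.

End BAGFacts.

Section ForestArguments.
Variables (R : realType) (V C : finType) (k : nat).
Variables (isnum : 'I_k -> bool) (Dn : 'I_k -> pred R) (Dc : 'I_k -> {set V}).
Variable F : forest R V C k.

Local Notation args := (args isnum Dc F).
Local Notation partset := (partset Dn F).

Let class_args := [seq AClass R V k y | y <- enum C].
Let rule_args := [seq ARule T r | T <- F, r <- T].
Let feat_args := flatten [seq (if isnum i
  then [seq AFeatN R V C i j | j <- iota 0 (size (thresholds F i)).+1]
  else [seq AFeatC R C i v | v <- enum (Dc i)]) | i <- enum 'I_k].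

Lemma mem_argsE a : a \in args = [|| a \in class_args, a \in rule_args | a \in feat_args].
Proof. by rewrite !mem_cat. Qed.

Lemma mem_args_featC i v : (AFeatC R C i v \in args) = ~~ isnum i && (v \in Dc i).
Proof.
rewrite mem_argsE.
have -> : AFeatC R C i v \in class_args = false by apply/mapP => -[].
have -> : AFeatC R C i v \in rule_args = false by apply/allpairsPdep => -[? [? []]].
apply/flatten_mapP/andP => [[i' _]|[num_iF v_in]].
  case: ifP => num_i' /mapP[v' v'_in] // [-> ->].
  by rewrite num_i' -mem_enum.
exists i; first by rewrite mem_enum.
by rewrite (negbTE num_iF); apply/mapP; exists v; rewrite ?mem_enum.
Qed.

Lemma mem_args_featN i j :
  (AFeatN R V C i j \in args) = isnum i && (j <= size (thresholds F i))%N.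
Proof.
rewrite mem_argsE.
have -> : AFeatN R V C i j \in class_args = false by apply/mapP => -[].
have -> : AFeatN R V C i j \in rule_args = false by apply/allpairsPdep => -[? [? []]].
apply/flatten_mapP/andP => [[i' _]|[num_i j_le]].
  case: ifP => num_i' /mapP[j' j'_in] // [-> ->].
  by move: j'_in; rewrite num_i' mem_iota ltnS.
exists i; first by rewrite mem_enum.
by rewrite num_i; apply/mapP; exists j; rewrite ?mem_iota ?ltnS.
Qed.

Lemma mem_args_rule T r : (ARule T r \in args) = (T \in F) && (r \in T).
Proof.
rewrite mem_argsE.
have -> : ARule T r \in class_args = false by apply/mapP => -[].
have -> : ARule T r \in feat_args = false.
  by apply/flatten_mapP => -[i _]; case: ifP => _ /mapP[].
rewrite orbF /=; apply/allpairsPdep/andP => [[T' [r' [T'_in r'_in [-> ->]]]]|[T_in r_in]].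
  by rewrite T'_in.
by exists T, r.
Qed.

Lemma thresholds_sorted i : sorted <=%R (thresholds F i).
Proof. exact/sort_sorted/le_total. Qed.

Lemma mem_thresholds T r l t : T \in F -> r \in T -> l \in prem r ->
  l.2.2 = inr t -> t \in thresholds F (litfeat l).
Proof.
move=> T_in r_in l_in l_thr; rewrite /thresholds mem_sort mem_undup.
apply/flatten_mapP; exists r; first by apply/flattenP; exists T.
apply/flatten_mapP; exists l => //.
by case: l l_thr {l_in} => b [i c] /= ->; rewrite /lit_thr /= eqxx inE.
Qed.

Lemma partset_feat_unique b b' i w : featof b = Some i -> featof b' = Some i ->
  partset b w -> partset b' w -> b = b'.
Proof.
case: b => // i1 c1; case: b' => // i2 c2 [<-] [<-]; case: w => [r|v] //=.
  by move=> /eqP[<-] /eqP[<-].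
move=> /andP[_ r_in1] /andP[_ r_in2].
by rewrite (in_interval_inj (thresholds_sorted _) r_in1 r_in2).
Qed.

(* Partition sets are cut out by the thresholds of F, so no literal of F
   separates two values of the same partition set. *)
Lemma lit_sat_partset T r l b w w' : T \in F -> r \in T -> l \in prem r ->
  featof b = Some (litfeat l) -> partset b w -> partset b w' ->
  lit_sat l w = lit_sat l w'.
Proof.
move=> T_in r_in l_in; case: b => // [i v [_] /eqP-> /eqP-> //|i j [->]].
case: w w' => [r1|//] [r2|//] /= /andP[_ r1_in] /andP[_ r2_in].
suff: cond_sat l.2.2 (inl r1) = cond_sat l.2.2 (inl r2) by rewrite /lit_sat => ->.
case l_thr: l.2.2 => [//|t] /=.
have t_in := mem_thresholds T_in r_in l_in l_thr.
have t_idx : (index t (thresholds F (litfeat l)) < size (thresholds F (litfeat l)))%N.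
  by rewrite index_mem.
rewrite -(nth_index 0 t_in).
rewrite (in_interval_le_nth (thresholds_sorted _) r1_in t_idx).
by rewrite (in_interval_le_nth (thresholds_sorted _) r2_in t_idx).
Qed.

End ForestArguments.

Section ExplanationLabelling.
Variables (R : realType) (V C : finType) (k : nat).
Variables (isnum : 'I_k -> bool) (Dn : 'I_k -> pred R) (Dc : 'I_k -> {set V}).
Variables (F : forest R V C k) (x : input R V k).

Local Notation args := (args isnum Dc F).
Local Notation B := (BF isnum Dn Dc F).
Local Notation L := (Lx isnum Dn Dc F x).
Local Notation att := (att Dn F).
Local Notation partset := (partset Dn F).
Local Notation AC := (AClass R V k).

Lemma att_featE b a i : featof a = Some i -> att b a = (featof b == Some i) && (b != a).
Proof. by case: a => // i' ? [<-]; case: b. Qed.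

Lemma att_ruleE b T r : att b (ARule T r) =
  `[< exists l, l \in prem r /\ Some (litfeat l) = featof b /\
                forall w, partset b w -> ~~ lit_sat l w >].
Proof. by case: b => //= *; apply/esym/asboolPn => -[l [_ []]]. Qed.

Lemma Lx_feat b i : featof b = Some i -> L b = if partset b (x i) then lin else lout.
Proof. by case: b => //= i' ? [->]. Qed.

Lemma Lx_class y : L (AC y) = dom_label B L (AC y).
Proof. by apply: eq_dom_label; case. Qed.

Lemma class_out y y' : y' != y -> L (AC y) = lin -> L (AC y') = lout.
Proof.
move=> neq; apply: dom_label_rival_out (Lx_class y) (Lx_class y').
  by case=> //= _ r /eqP->; rewrite eq_sym.
by case=> //= _ r /eqP->.
Qed.

Section InDomain.
Hypothesis x_in : in_domain isnum Dn Dc x.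

Lemma feat_cell_exists i :
  exists2 b, b \in args & (featof b == Some i) && partset b (x i).
Proof.
have := x_in i; case: (x i) => [r|v] /andP[num_i x_i_in].
  have [j r_in] := in_interval_exists (thresholds F i) r.
  exists (AFeatN R V C i j); last by rewrite /= eqxx x_i_in.
  by rewrite mem_args_featN num_i (in_interval_size r_in).
by exists (AFeatC R C i v); rewrite ?mem_args_featC ?num_i //= !eqxx.
Qed.

Lemma feat_bicomplete a i : featof a = Some i -> bicomplete_at B L a.
Proof.
move=> feat_a; apply: (@bicomplete_at_unsupported _ _ _ _ (partset a (x i))).
- by case: a feat_a => // ? ? _ [].
- exact: Lx_feat.
- move=> a_cell b _; rewrite /= (att_featE _ feat_a) => /andP[/eqP feat_b b_neq].
  rewrite (Lx_feat feat_b); case: ifP => // b_cell.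
  by rewrite (partset_feat_unique feat_b feat_a b_cell a_cell) eqxx in b_neq.
- move=> a_cellF; have [b b_in /andP[/eqP feat_b b_cell]] := feat_cell_exists i.
  exists b => //=; rewrite (att_featE _ feat_a) feat_b eqxx (Lx_feat feat_b) b_cell andbT /=.
  by apply: contraNneq a_cellF => <-.
Qed.

Lemma rule_bicomplete T r : T \in F -> r \in T -> bicomplete_at B L (ARule T r).
Proof.
move=> T_in r_in; apply: (@bicomplete_at_unsupported _ _ _ _ (rule_sat x r)).
- by case.
- by rewrite /= /active r_in.
- move=> r_sat b _; rewrite /= att_ruleE => /asboolP[l [l_in [feat_b l_unsat]]].
  rewrite (Lx_feat (esym feat_b)); case: ifP => // b_cell.
  by move: (l_unsat _ b_cell); rewrite (allP r_sat l l_in).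
- case/allPn => l l_in l_unsat.
  have [b b_in /andP[/eqP feat_b b_cell]] := feat_cell_exists (litfeat l).
  exists b => //; rewrite /= att_ruleE (Lx_feat feat_b) b_cell andbT.
  apply/asboolP; exists l; split=> //; split=> [|w w_cell]; first by rewrite feat_b.
  by rewrite (lit_sat_partset T_in r_in l_in feat_b w_cell b_cell).
Qed.

(* If all attackers of A_y are out, the active rule of any tree of F cannot
   attack A_y, so it supports A_y unopposed. *)
Lemma class_bicomplete y : is_forest isnum Dn Dc F -> (1 <= size F)%N ->
  bicomplete_at B L (AC y).
Proof.
move=> [_ F_trees] F_nonempty; apply: bicomplete_at_dom_label (Lx_class y) _.
move=> att_out.
have [T T_in] : exists T, T \in F.
  by case: F F_nonempty => // T ? _; exists T; rewrite inE eqxx.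
have [_ [_ /(_ x x_in) [r [[r_in r_sat] _]]]] := F_trees T T_in.
have r_active : L (ARule T r) = lin by rewrite /= /active r_in r_sat.
have conc_r : conc r == y.
  apply: contraT => conc_r_neq; move: r_active.
  by rewrite att_out ?mem_args_rule ?T_in.
have no_att_nout : n_att_nout B L (AC y) = 0%N.
  apply/eqP; rewrite eqn0Ngt -has_count; apply/hasPn => b b_in.
  by apply/negP => /andP[ab]; rewrite (att_out b b_in ab).
rewrite /sup_dom no_att_nout -has_count; apply/hasP; exists (ARule T r).
  by rewrite mem_args_rule T_in.
by rewrite /= conc_r /active r_in r_sat.
Qed.
End InDomain.
End ExplanationLabelling.

Unset Implicit Arguments. Set Strict Implicit.

Theorem lemma3 (R : realType) (V C : finType) (k : nat)
  (isnum : 'I_k -> bool) (Dn : 'I_k -> pred R) (Dc : 'I_k -> {set V})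
  (F : forest R V C k) :
  is_forest isnum Dn Dc F -> (1 <= size F)%N ->
  forall x : input R V k, in_domain isnum Dn Dc x ->
    bicomplete (BF isnum Dn Dc F) (Lx isnum Dn Dc F x) /\
    (forall y y' : C, Lx isnum Dn Dc F x (@AClass R V C k y) = lin ->
                      Lx isnum Dn Dc F x (@AClass R V C k y') = lin -> y = y') /\
    (forall y : C, Lx isnum Dn Dc F x (@AClass R V C k y) = lin ->
       forall y' : C, y' != y -> Lx isnum Dn Dc F x (@AClass R V C k y') = lout).
Proof.
move=> F_forest F_nonempty x x_in; split; [|split].
- case=> [y|T r|i v|i j].
  + by move=> _; apply: class_bicomplete.
  + by rewrite mem_args_rule => /andP[]; apply: rule_bicomplete.
  + by move=> _; apply: (feat_bicomplete F x_in (i := i)).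
  + by move=> _; apply: (feat_bicomplete F x_in (i := i)).
- move=> y y' Ly_in Ly'_in; case: (eqVneq y' y) => // neq.
  by move: Ly'_in; rewrite (class_out neq Ly_in).
- by move=> y Ly_in y' neq; exact: class_out neq Ly_in.
Qed.
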